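(* Let $\lambda$ be a weak Perron number and let $f_\lambda:\ast_{Nn}\to\ast_{Nn}$ be the star map constructed below. Then its split map $S(f_\lambda):S(\ast_{Nn})\to S(\ast_{Nn})$ is ergodic; i.e. for each pair of edges $y_I,z_J$ of $S(\ast_{Nn})$ there exists $L$ such that the edge path $S(f_\lambda)^L(y_I)$ traverses $z_J$.
   Context: A weak Perron number is a real algebraic integer $\lambda$ with $\lambda\ge|\lambda_i|$ for all Galois conjugates; a Perron number satisfies the strict inequality for all conjugates other than itself. Let $N$ be a positive integer such that $\mu=\lambda^N$ is Perron, and let $f_\mu:\ast_n\to\ast_n$ (with its edge lengths) be the star map constructed for the Perron number $\mu$ as follows: with $\mathcal{O}_\mu$ the ring of integers of $\mathbb{Q}(\mu)$, $V_\mu=\mathbb{Q}(\mu)\otimes\mathbb{R}$, unit eigenvectors $v_1$ (eigenvalue $\mu$), $v_2,\dots$ of multiplication by $\mu$, cone $K_\mu=\{\sum a_iv_i:a_1>0,a_1>|a_i|\}$, a rational closed convex polyhedral cone $KR_\mu$ generated by elements of $\mathcal{O}_\mu$ with $\mu K_\mu\subset KR_\mu\subset K_\mu$, semigroup $(\mathcal{O}_\mu\cap KR_\mu)\setminus\{0\}$ generated by $s_1,\dots,s_m$; positive integers $N'>n_0$ with $\mu^{N'}\equiv\mu^{n_0}\pmod{2\mathcal{O}_\mu}$; an integer $M=p(N'-n_0)+N'$ and nonnegative integers $e^{(k)}_i$ with $\mu^Ms_k=\sum_i(2e^{(k)}_i+2)s_i+2\mu s_k+\mu^{n_0}s_k$;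 $n=mM$, edges $(s_k,i)$ of length $\mu^{i-1}s_k$; $f_\mu$ fixes the center, maps $(s_k,i)\mapsto(s_k,i+1)$ for $i<M$, and maps $(s_k,M)$ to the path traversing $(s_k,1)$ back and forth $e^{(k)}_k+1$ times, then each $(s_j,1)$, $j\ne k$ (in some fixed order), back and forth $e^{(k)}_j+1$ times, then $(s_k,2)$ out and back once, then $(s_k,n_0+1)$ once. Now $\ast_{Nn}$ is formed by gluing $N$ copies $C^0,\dots,C^{N-1}$ of $\ast_n$ at their centers; edge $(i,j)$ is the copy in $C^i$ of edge $j$ of $\ast_n$, with length $\lambda^i$ times the length of $j$. The map $f_\lambda$ sends $(i,j)\mapsto(i+1,j)$ for $i<N-1$, and sends $(N-1,j)$ to the copy in $C^0$ of the edge path $f_\mu(j)$. Split map: prototype $P_7$ with edges $a,\dots,g$ from $v_0$ to $v_1$ (uppercase = reversed), $\phi_1=\mathrm{id}$, and for $m'\ge0$, $\phi_{3+2m'}$: $a\mapsto aG(aB)^{m'}a$, $b\mapsto bD(bC)^{m'}b$, $c\mapsto cF(cA)^{m'}c$, $d\mapsto aB(aB)^{m'}a$, $e\mapsto cB(aB)^{m'}a$, $f\mapsto aC(aB)^{m'}a$, $g\mapsto bE(bA)^{m'}b$. The split graph replaces each edge $x_I$ (oriented center to tip) by seven parallel edges $a_I,\dots,g_I$; the split map sends $y_I$ to the path obtained from the word $\phi_\ell(y)$, $\ell$ the number of edges of $f_\lambda(x_I)$, by giving its $t$-th letter the subscript of the $t$-th edge of $f_\lambda(x_I)$. *)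

From HB Require Import structures.
From mathcomp Require Import all_boot all_order all_algebra all_field.
Set Implicit Arguments. Unset Strict Implicit. Unset Printing Implicit Defensive.
Import Order.TTheory GRing.Theory Num.Theory.
Local Open Scope ring_scope.

Definition conjugate (x z : algC) : Prop := root (minCpoly x) z.

Definition weak_perron (l : algC) : Prop :=
  [/\ l \is Num.real, l \in Aint & forall z, conjugate l z -> `|z| <= l].

Definition perron (l : algC) : Prop :=
  weak_perron l /\ (forall z, conjugate l z -> z != l -> `|z| < l).

Definition inQF (mu x : algC) : Prop :=
  exists p : {poly rat}, x = (map_poly ratr p).[mu].

Definition inO (mu x : algC) : Prop := x \in Aint /\ inQF mu x.

(* Cone K_mu, at the points of Q(mu): the coordinate of x along the
   eigenvector for the conjugate z of mu is sigma_z(x) = p(z) where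
   x = p(mu); condition a_1 > 0 and a_1 > |a_i|. *)
Definition inK (mu x : algC) : Prop :=
  exists p : {poly rat}, x = (map_poly ratr p).[mu] /\ 0 < x /\
    forall z, conjugate mu z -> z != mu -> `|(map_poly ratr p).[z]| < x.

(* The points of Q(mu) in the closed convex cone generated by r_0..r_{q-1}
   (for a rational cone these are the nonnegative rational combinations) *)
Definition inQcone (r : nat -> algC) (q : nat) (x : algC) : Prop :=
  exists c : nat -> rat, (forall j, 0 <= c j) /\
    x = \sum_(j < q) ratr (c j) * r j.

Local Close Scope ring_scope.

(* an edge path is a sequence of edges with orientation
   (true = traversed in its own direction, false = reversed) *)
Definition rev_path (E : Type) (p : seq (E * bool)) : seq (E * bool) :=
  rev [seq (x.1, ~~ x.2) | x <- p].

Definition apply_map (E : Type) (g : E -> seq (E * bool)) (p : seq (E * bool))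
  : seq (E * bool) :=
  flatten [seq if x.2 then g x.1 else rev_path (g x.1) | x <- p].

Definition traverses (E : eqType) (g : E -> seq (E * bool)) (L : nat) (y z : E)
  : bool := z \in [seq x.1 | x <- iter L (apply_map g) [:: (y, true)]].

Definition ergodic (E : eqType) (valid : pred E) (g : E -> seq (E * bool)) : Prop :=
  forall y z, valid y -> valid z -> exists L, traverses g L y z.

Definition bf (E : Type) (x : E) : seq (E * bool) := [:: (x, true); (x, false)].
Definition rep (E : Type) (n : nat) (p : seq (E * bool)) := flatten (nseq n p).

(* Edges of *_n : (k, i) = edge (s_k, i), 0 <= k < m, 1 <= i <= M.
   e k i = e^{(k)}_i ; ordk k = the fixed order of the j <> k. *)
Definition f_mu (M n0 : nat) (e : nat -> nat -> nat) (ordk : nat -> seq nat)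
  (x : nat * nat) : seq ((nat * nat) * bool) :=
  let: (k, i) := x in
  if i < M then [:: ((k, i.+1), true)]
  else rep (e k k).+1 (bf (k, 1%N))
       ++ flatten [seq rep (e k j).+1 (bf (j, 1%N)) | j <- ordk k]
       ++ bf (k, 2%N) ++ [:: ((k, n0.+1), true)].

(* Edges of *_{Nn} : (c, (k, i)) = copy in C^c of edge (s_k, i), 0 <= c < N. *)
Definition valid_edge (N m M : nat) (x : nat * (nat * nat)) : bool :=
  [&& x.1 < N, x.2.1 < m, 0 < x.2.2 & x.2.2 <= M].

Definition f_lambda (N M n0 : nat) (e : nat -> nat -> nat) (ordk : nat -> seq nat)
  (x : nat * (nat * nat)) : seq ((nat * (nat * nat)) * bool) :=
  if x.1.+1 < N then [:: ((x.1.+1, x.2), true)]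
  else [seq ((0%N, y.1), y.2) | y <- f_mu M n0 e ordk x.2].

Inductive letter := La | Lb | Lc | Ld | Le | Lf | Lg.

Definition letter_eqb (x y : letter) : bool :=
  match x, y with
  | La, La | Lb, Lb | Lc, Lc | Ld, Ld | Le, Le | Lf, Lf | Lg, Lg => true
  | _, _ => false end.
Lemma letter_eqP : Equality.axiom letter_eqb.
Proof. by case; case; constructor. Qed.
HB.instance Definition _ := hasDecEq.Build letter letter_eqP.

(* letters of a word: (letter, lowercase?) ; uppercase = reversed *)
Definition lo (y : letter) := (y, true).
Definition up (y : letter) := (y, false).

Definition phi_odd (m' : nat) (y : letter) : seq (letter * bool) :=
  match y with
  | La => [:: lo La; up Lg] ++ rep m' [:: lo La; up Lb] ++ [:: lo La]
  | Lb => [:: lo Lb; up Ld] ++ rep m' [:: lo Lb; up Lc] ++ [:: lo Lb]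
  | Lc => [:: lo Lc; up Lf] ++ rep m' [:: lo Lc; up La] ++ [:: lo Lc]
  | Ld => [:: lo La; up Lb] ++ rep m' [:: lo La; up Lb] ++ [:: lo La]
  | Le => [:: lo Lc; up Lb] ++ rep m' [:: lo La; up Lb] ++ [:: lo La]
  | Lf => [:: lo La; up Lc] ++ rep m' [:: lo La; up Lb] ++ [:: lo La]
  | Lg => [:: lo Lb; up Le] ++ rep m' [:: lo Lb; up La] ++ [:: lo Lb]
  end.

(* phi_l; only l = 1 and odd l >= 3 are defined in the prototype
   (these are the only lengths that occur); other lengths give [::]. *)
Definition phi (l : nat) (y : letter) : seq (letter * bool) :=
  if l == 1%N then [:: lo y]
  else if odd l && (3 <= l) then phi_odd (l - 3)./2 y else [::].

Definition split_map (E : Type) (g : E -> seq (E * bool)) (x : letter * E)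
  : seq ((letter * E) * bool) :=
  let: (y, xI) := x in
  let w := g xI in
  [seq ((t.1.1, t.2.1), t.1.2) | t <- zip (phi (size w) y) w].

Definition split_valid (N m M : nat) (x : letter * (nat * (nat * nat))) : bool :=
  valid_edge N m M x.2.

(* Under f_lambda every arm k of the star is a chain of N * M edges, each
   mapped onto the next one, ending at the top edge (N - 1, (k, M)); so in the
   split map every edge reaches the top edge of its arm carrying the same
   letter, and is reached from the bottom edge (0, (k, 1)) carrying that letter.
   The top edge is mapped to a path that first runs back and forth along
   (k, 1) and visits every (j, 1) at an even position.  Hence the top edge with
   letter y reaches the bottom edges of its arm carrying the first two letters
   of phi(y), and with letter a it reaches the bottom edge of every arm with
   letter a, since all letters of phi(a) at even positions are a.  The graph
   on {a, ..., g} given by the first two letters of phi is strongly connected,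
   so all top edges, and then all edges, are mutually reachable. *)

From HB Require Import structures.
From mathcomp Require Import all_boot all_order all_algebra all_field.
From mathcomp Require Import zify.
Import Order.TTheory GRing.Theory Num.Theory.
Set Implicit Arguments. Unset Strict Implicit. Unset Printing Implicit Defensive.

Section Reachability.
Variables (E : eqType) (g : E -> seq (E * bool)).

Definition step (x z : E) : bool := z \in [seq u.1 | u <- g x].

Definition reach (y z : E) : Prop := exists L, traverses g L y z.

Lemma mem_apply_map p z :
  (z \in [seq u.1 | u <- apply_map g p]) = has (fun u => step u.1 z) p.
Proof.
elim: p => [|[x b] p IH] //=.
rewrite /apply_map /= map_cat mem_cat -/(apply_map g p) IH.
by case: b; rewrite // /rev_path map_rev mem_rev -map_comp.
Qed.

Lemma traversesS L y z :
  traverses g L.+1 y z = has (fun u => step u.1 z) (iter L (apply_map g) [:: (y, true)]).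
Proof. by rewrite /traverses iterS mem_apply_map. Qed.

Lemma reach_refl y : reach y y.
Proof. by exists 0; rewrite /traverses /= inE. Qed.

Lemma reach_step y x z : reach y x -> step x z -> reach y z.
Proof.
case=> L /mapP [[x' b] Hx' /= ->] Hxz; exists L.+1.
by rewrite traversesS; apply/hasP; exists (x', b).
Qed.

Lemma reach_trans y x z : reach y x -> reach x z -> reach y z.
Proof.
move=> Hyx [L]; elim: L z => [|L IH] z.
  by rewrite /traverses /= inE => /eqP ->.
rewrite traversesS => /hasP [u Hu Hz].
by apply: reach_step Hz; apply: IH; apply/mapP; exists u.
Qed.

Lemma reach_chain (v : nat -> E) a b :
  (forall h, a <= h < b -> step (v h) (v h.+1)) -> a <= b -> reach (v a) (v b).
Proof.
elim: b => [|b IH] Hv; first by rewrite leqn0 => /eqP ->; apply: reach_refl.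
rewrite leq_eqVlt => /orP [/eqP -> | Hab]; first exact: reach_refl.
apply: reach_step (IH _ Hab) (Hv _ _); last by rewrite -ltnS Hab /=.
by move=> h /andP [Hah Hhb]; rewrite Hv // Hah ltnW.
Qed.

End Reachability.

Lemma size_flatten_bf (T : Type) (u : seq T) :
  size (flatten (map (@bf T) u)) = (size u).*2.
Proof. by elim: u => [|x u IH] //=; rewrite IH doubleS. Qed.

Lemma nth_flatten_bf (T : Type) (x0 : T) d (u : seq T) t : t < (size u).*2 ->
  nth d (flatten (map (@bf T) u)) t = (nth x0 u t./2, ~~ odd t).
Proof.
elim: u t => [|x u IH] [|[|t]] //=; rewrite doubleS !ltnS => Ht.
by rewrite IH // negbK.
Qed.

Lemma size_rep (T : Type) n (s : seq (T * bool)) : size (rep n s) = n * size s.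
Proof. by elim: n => [|n IH] //=; rewrite size_cat IH mulSn. Qed.

Lemma rep_bf (T : Type) n (x : T) : rep n (bf x) = flatten (map (@bf T) (nseq n x)).
Proof. by elim: n => [|n IH] //=; rewrite -IH. Qed.

Lemma flatten_bf_flatten (T : Type) (ss : seq (seq T)) :
  flatten (map (@bf T) (flatten ss)) = flatten [seq flatten (map (@bf T) u) | u <- ss].
Proof. by elim: ss => [|u ss IH] //=; rewrite map_cat flatten_cat IH. Qed.

Lemma nth_rep_pair_even (T : Type) (a b d : T * bool) n i : i <= n ->
  nth d (rep n [:: a; b] ++ [:: a]) i.*2 = a.
Proof. by elim: n i => [|n IH] [|i] //= Hi; rewrite IH. Qed.

Lemma step_split_map (E : eqType) (g : E -> seq (E * bool)) y x t :
  size (phi (size (g x)) y) = size (g x) -> t < size (g x) ->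
  step (split_map g) (y, x)
    ((nth (lo La) (phi (size (g x)) y) t).1, (nth (x, true) (g x) t).1).
Proof.
move=> Hs Ht; rewrite /step /split_map -map_comp.
apply/mapP; exists (nth (lo La, (x, true)) (zip (phi (size (g x)) y) (g x)) t).
  by apply: mem_nth; rewrite size_zip Hs minnn.
by rewrite nth_zip.
Qed.

Lemma step_split_map_single (E : eqType) (g : E -> seq (E * bool)) y x x' b :
  g x = [:: (x', b)] -> step (split_map g) (y, x) (y, x').
Proof. by move=> Hg; rewrite /step /split_map Hg /= inE. Qed.

Lemma size_phi_odd m' y : size (phi_odd m' y) = m'.*2 + 3.
Proof. by case: y; rewrite /= size_cat size_rep /=; lia. Qed.

Lemma phi_odd_lengthE n y : 0 < n -> phi n.*2.+1 y = phi_odd n.-1 y.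
Proof.
case: n => [|n] // _; rewrite /phi doubleS /= odd_double.
by rewrite -(addn3 n.*2) addnK doubleK ltn_addl.
Qed.

Lemma take2_phi_odd m' y : take 2 (phi_odd m' y) = take 2 (phi_odd 0 y).
Proof. by case: y => /=; rewrite take0. Qed.

Lemma nth_phi_odd_La_even m' i : i <= m'.+1 -> nth (lo La) (phi_odd m' La) i.*2 = lo La.
Proof. by case: i => [|i] //= Hi; rewrite nth_rep_pair_even. Qed.

Definition phi_head_letters (y : letter) : seq letter :=
  [seq u.1 | u <- take 2 (phi_odd 0 y)].

Lemma phi_head_letters_cover z : exists y, z \in phi_head_letters y.
Proof. by case: z; [exists La | exists Lb | exists Lc | exists Lb | exists Lg | exists Lc | exists La]. Qed.

Lemma phi_head_letters_connected (R : letter -> letter -> Prop) :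
  (forall x y z, R x y -> R y z -> R x z) ->
  (forall y l, l \in phi_head_letters y -> R y l) -> forall y z, R y z.
Proof.
move=> trans head.
have ag : R La Lg by apply: head.
have gb : R Lg Lb by apply: head.
have ge : R Lg Le by apply: head.
have bd : R Lb Ld by apply: head.
have ec : R Le Lc by apply: head.
have cf : R Lc Lf by apply: head.
have da : R Ld La by apply: head.
have fa : R Lf La by apply: head.
have to_a y : R y La.
  by case: y; eauto.
have from_a z : R La z.
  by case: z; eauto.
by move=> y z; apply: trans (to_a y) (from_a z).
Qed.

Lemma edivnS_lt d h :
  (h %% d).+1 < d -> h.+1 %% d = (h %% d).+1 /\ h.+1 %/ d = h %/ d.
Proof.
move=> Hr; have d_gt0 : 0 < d by apply: leq_ltn_trans Hr.
by rewrite {1 3}(divn_eq h d) -addnS modnMDl divnMDl // (modn_small Hr) (divn_small Hr) addn0.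
Qed.

Lemma edivnS_wrap d h :
  0 < d -> (h %% d).+1 = d -> h.+1 %% d = 0 /\ h.+1 %/ d = (h %/ d).+1.
Proof.
by move=> d_gt0 Hr; rewrite {1 2}(divn_eq h d) -addnS Hr -mulSnr modnMl mulnK.
Qed.

Section SplitStarMap.
Variables (N M n0 m : nat) (e : nat -> nat -> nat) (ordk : nat -> seq nat).
Hypothesis hord : forall k, k < m -> perm_eq (ordk k) [seq j <- iota 0 m | j != k].
Hypotheses (N_gt0 : 0 < N) (M_gt0 : 0 < M).

Notation G := (split_map (f_lambda N M n0 e ordk)).

Definition backtracked_edges k : seq (nat * nat) :=
  nseq (e k k).+1 (k, 1) ++ flatten [seq nseq (e k j).+1 (j, 1) | j <- ordk k]
  ++ [:: (k, 2)].

Lemma f_mu_top k : f_mu M n0 e ordk (k, M) =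
  flatten (map (@bf _) (backtracked_edges k)) ++ [:: ((k, n0.+1), true)].
Proof.
rewrite /f_mu ltnn.
have -> : [seq rep (e k j).+1 (bf (j, 1)) | j <- ordk k] =
    [seq flatten (map (@bf _) u) | u <- [seq nseq (e k j).+1 (j, 1) | j <- ordk k]].
  by rewrite -map_comp; apply: eq_map => j; apply: rep_bf.
rewrite /backtracked_edges !map_cat !flatten_cat rep_bf flatten_bf_flatten.
by rewrite -!catA.
Qed.

Lemma mem_backtracked_edges k j : k < m -> j < m -> (j, 1) \in backtracked_edges k.
Proof.
move=> Hk Hj; rewrite !mem_cat; have [-> | Hjk] := eqVneq j k.
  by rewrite mem_nseq eqxx.
apply/orP; right; apply/orP; left; apply/flatten_mapP; exists j.
  by rewrite (perm_mem (hord Hk)) mem_filter Hjk mem_iota.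
by rewrite mem_nseq eqxx.
Qed.

(* The edges of the k-th arm, numbered in the order in which f_lambda climbs
   them: (c, (k, i)) is number (i - 1) * N + c. *)
Definition level_edge k h : nat * (nat * nat) := (h %% N, (k, (h %/ N).+1)).

Lemma step_level_edge y k h :
  h.+1 < N * M -> step G (y, level_edge k h) (y, level_edge k h.+1).
Proof.
move=> Hh; apply: (@step_split_map_single _ _ _ _ _ true).
rewrite /f_lambda /level_edge /=; case: ifP => Hr.
  by have [-> ->] := edivnS_lt Hr.
have [-> ->] : h.+1 %% N = 0 /\ h.+1 %/ N = (h %/ N).+1.
  by apply: edivnS_wrap => //; have := ltn_pmod h N_gt0; lia.
have -> : (h %/ N).+1 < M.
  by rewrite -(ltn_pmul2l N_gt0); move: Hh; rewrite {1}(divn_eq h N); nia.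
by [].
Qed.

Lemma reach_level_edge y k h h' :
  h <= h' < N * M -> reach G (y, level_edge k h) (y, level_edge k h').
Proof.
case/andP=> Hhh' Hh'; apply: (reach_chain (v := fun h => (y, level_edge k h))) => //.
by move=> i /andP [_ Hi]; apply: step_level_edge; apply: leq_ltn_trans Hh'.
Qed.

Lemma level_edgeE c k i : c < N -> (c, (k, i.+1)) = level_edge k (i * N + c).
Proof.
by move=> Hc; rewrite /level_edge modnMDl divnMDl // (modn_small Hc) (divn_small Hc) addn0.
Qed.

Definition top y k : letter * (nat * (nat * nat)) := (y, (N.-1, (k, M))).
Definition bottom y k : letter * (nat * (nat * nat)) := (y, (0, (k, 1))).

Lemma reach_top y c k i : c < N -> 0 < i <= M -> reach G (y, (c, (k, i))) (top y k).
Proof.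
case: i => [|i] // Hc /andP [_ Hi].
have HN : N.-1 < N by rewrite ltn_predL.
rewrite /top -{2}(prednK M_gt0) (level_edgeE k i Hc) (level_edgeE k _ HN).
by apply: reach_level_edge; nia.
Qed.

Lemma reach_from_bottom y c k i :
  c < N -> 0 < i <= M -> reach G (bottom y k) (y, (c, (k, i))).
Proof.
case: i => [|i] // Hc /andP [_ Hi].
rewrite /bottom (level_edgeE k 0 N_gt0) (level_edgeE k i Hc).
by apply: reach_level_edge; nia.
Qed.

Lemma reach_bottom_top y k : reach G (bottom y k) (top y k).
Proof. by apply: reach_top. Qed.

Lemma step_top y k t : t < (size (backtracked_edges k)).*2 ->
  step G (top y k)
    ((nth (lo La) (phi_odd (size (backtracked_edges k)).-1 y) t).1,
     (0, nth (0, 0) (backtracked_edges k) t./2)).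
Proof.
set u := backtracked_edges k => Ht.
have u_gt0 : 0 < size u by rewrite size_cat size_nseq.
have Fk : f_lambda N M n0 e ordk (N.-1, (k, M)) =
    [seq ((0, v.1), v.2) | v <- flatten (map (@bf _) u) ++ [:: ((k, n0.+1), true)]].
  by rewrite /f_lambda f_mu_top ifF //= prednK // ltnn.
have Fk_size : size (f_lambda N M n0 e ordk (N.-1, (k, M))) = (size u).*2.+1.
  by rewrite Fk size_map size_cat size_flatten_bf addn1.
have := @step_split_map _ (f_lambda N M n0 e ordk) y (N.-1, (k, M)) t.
rewrite Fk_size phi_odd_lengthE // size_phi_odd.
have -> : (size u).-1.*2 + 3 = (size u).*2.+1 by rewrite -(prednK u_gt0) /=; lia.
move=> /(_ erefl (ltnW Ht)); rewrite Fk (nth_map ((0, 0), true)); last first.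
  by rewrite size_cat size_flatten_bf ltn_addr.
by rewrite nth_cat size_flatten_bf Ht (nth_flatten_bf (0, 0)).
Qed.

Lemma reach_top_bottom_head y l k :
  l \in phi_head_letters y -> reach G (top y k) (bottom l k).
Proof.
case/mapP=> [[l' b] Hl ->{l}]; apply: reach_step (reach_refl _ _) _.
move: Hl; rewrite -(take2_phi_odd (size (backtracked_edges k)).-1).
case/(nthP (lo La)) => t; rewrite size_take size_phi_odd ltn_min => /andP [Ht _].
rewrite nth_take // => Hnth.
have := @step_top y k t; rewrite Hnth.
by case: t Ht {Hnth} => [|[|]] // _; apply; rewrite size_cat size_nseq.
Qed.

Lemma reach_top_bottom_La k j : k < m -> j < m -> reach G (top La k) (bottom La j).
Proof.
move=> Hk Hj; apply: reach_step (reach_refl _ _) _.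
have Hi : index (j, 1) (backtracked_edges k) < size (backtracked_edges k).
  by rewrite index_mem mem_backtracked_edges.
have := @step_top La k (index (j, 1) (backtracked_edges k)).*2.
rewrite doubleK nth_index ?mem_backtracked_edges // nth_phi_odd_La_even.
  by apply; rewrite ltn_double.
rewrite prednK; first exact: ltnW.
exact: leq_ltn_trans (leq0n _) Hi.
Qed.

Lemma reach_top_top y z k k' : k < m -> k' < m -> reach G (top y k) (top z k').
Proof.
move=> Hk Hk'.
have same_arm a : forall u v, reach G (top u a) (top v a).
  apply: (phi_head_letters_connected (R := fun u v => reach G (top u a) (top v a))).
    by move=> u v w; apply: reach_trans.
  by move=> u l Hl; apply: reach_trans (reach_top_bottom_head _ Hl) (reach_bottom_top _ _).
apply: reach_trans (same_arm k y La) _; apply: reach_trans (same_arm k' La z).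
exact: reach_trans (reach_top_bottom_La Hk Hk') (reach_bottom_top _ _).
Qed.

Lemma reach_split_star_map x x' :
  split_valid N m M x -> split_valid N m M x' -> reach G x x'.
Proof.
case: x => y [c [k i]]; case: x' => z [c' [k' i']].
case/and4P=> /= Hc Hk Hi HiM /and4P [/= Hc' Hk' Hi' Hi'M].
have [w Hw] := phi_head_letters_cover z.
apply: reach_trans (reach_top y k Hc _) _; first by rewrite Hi.
apply: reach_trans (reach_top_top y w Hk Hk') _.
apply: reach_trans (reach_top_bottom_head k' Hw) _.
by apply: reach_from_bottom; rewrite // Hi'.
Qed.

End SplitStarMap.

Local Open Scope ring_scope.

Theorem mainTheorem9
  (lambda : algC) (hwp : weak_perron lambda)
  (N : nat) (hN : (0 < N)%N) (hP : perron (lambda ^+ N))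
  (* KR_mu : generated by r_0, ..., r_{q-1} in O_mu *)
  (q : nat) (r : nat -> algC)
  (hr : forall j, (j < q)%N -> inO (lambda ^+ N) (r j))
  (hKR1 : forall x, inQF (lambda ^+ N) x -> inK (lambda ^+ N) x ->
            inQcone r q (lambda ^+ N * x))
  (hKR2 : forall x, inQcone r q x -> x != 0 -> inK (lambda ^+ N) x)
  (* generators s_0, ..., s_{m-1} of the semigroup (O_mu cap KR_mu) \ {0} *)
  (m : nat) (s : nat -> algC)
  (hs : forall k, (k < m)%N ->
          [/\ inO (lambda ^+ N) (s k), inQcone r q (s k) & s k != 0])
  (hgen : forall x, inO (lambda ^+ N) x -> inQcone r q x -> x != 0 ->
            exists c : nat -> nat, x = \sum_(k < m) (c k)%:R * s k)
  (N' n0 : nat) (hn0 : (0 < n0)%N) (hN'n0 : (n0 < N')%N)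
  (hcong : inO (lambda ^+ N) ((lambda ^+ N ^+ N' - lambda ^+ N ^+ n0) / 2))
  (p M : nat) (hM : M = (p * (N' - n0) + N')%N)
  (e : nat -> nat -> nat)
  (he : forall k, (k < m)%N ->
          lambda ^+ N ^+ M * s k =
            \sum_(i < m) ((2 * e k i + 2)%N%:R * s i)
            + 2 * lambda ^+ N * s k + lambda ^+ N ^+ n0 * s k)
  (ordk : nat -> seq nat)
  (hord : forall k, (k < m)%N -> perm_eq (ordk k) [seq j <- iota 0 m | j != k]) :
  ergodic (split_valid N m M) (split_map (f_lambda N M n0 e ordk)).
Proof.
(* Ergodicity depends only on the combinatorics of f_lambda; of the
   arithmetic hypotheses only 0 < M is used. *)
have M_gt0 : (0 < M)%N by rewrite hM addn_gt0 (leq_trans hn0 (ltnW hN'n0)) orbT.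
move=> x x' Hx Hx'.
exact: (reach_split_star_map n0 e hord hN M_gt0 Hx Hx').
Qed.
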